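(* Let $n_1,n_2$ be positive integers, $C=[c_{j_1,j_2}]\in\mathbb{R}^{n_1\times n_2}$, $\varepsilon>0$, and let $\mathbf{p}_1\in\mathbb{R}^{n_1}_{++}$, $\mathbf{p}_2\in\mathbb{R}^{n_2}_{++}$ satisfy $\mathbf{1}_{n_1}^\top\mathbf{p}_1=\mathbf{1}_{n_2}^\top\mathbf{p}_2$. For $(\mathbf{x},\mathbf{y})\in\mathbb{R}^{n_1}\times\mathbb{R}^{n_2}$ let $C(\mathbf{x},\mathbf{y})=C-\mathbf{x}\mathbf{1}_{n_2}^\top-\mathbf{1}_{n_1}\mathbf{y}^\top$, and set $\hat{\mathrm{D}}=\{(\mathbf{x},\mathbf{y})\in\mathbb{R}^{n_1}\times\mathbb{R}^{n_2}:\ C(\mathbf{x},\mathbf{y})>0 \text{ entrywise}\}$, $\mathrm{D}=\{(\mathbf{x},\mathbf{y})\in\hat{\mathrm{D}}:\ \mathbf{1}_{n_1}^\top\mathbf{x}-\mathbf{1}_{n_2}^\top\mathbf{y}=0\}$, $\beta_C(\mathbf{x},\mathbf{y})=-\sum_{j_1=1}^{n_1}\sum_{j_2=1}^{n_2}\log(c_{j_1,j_2}-x_{j_1}-y_{j_2})$ on $\hat{\mathrm{D}}$, and $$\varphi(\mathbf{x},\mathbf{y},C)=\mathbf{p}_1^\top\mathbf{x}+\mathbf{p}_2^\top\mathbf{y}-\varepsilon\beta_C(\mathbf{x},\mathbf{y})+n_1n_2\varepsilon(1-\log\varepsilon).$$ Then $\varphi$ is concave on $\hat{\mathrm{D}}$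 and strictly concave on $\mathrm{D}$, and $$\max_{(\mathbf{x},\mathbf{y})\in\hat{\mathrm{D}}}\varphi(\mathbf{x},\mathbf{y},C)=\max_{(\mathbf{x},\mathbf{y})\in\mathrm{D}}\varphi(\mathbf{x},\mathbf{y},C)=\tau_\beta(C,P,\varepsilon).$$ Moreover, $\varphi$ attains its maximum on $\hat{\mathrm{D}}$ exactly on the line $\mathrm{L}=\{(\mathbf{u}_1,\mathbf{u}_2)+t(\mathbf{1}_{n_1},-\mathbf{1}_{n_2}):t\in\mathbb{R}\}$, which intersects $\mathrm{D}$ at the unique point $(\mathbf{u}_1,\mathbf{u}_2)=((u_{j_1,1})_{j_1},(u_{j_2,2})_{j_2})$, and this point is the one for which the matrix $U=[u_{j_1,j_2}]$, $u_{j_1,j_2}=\frac{\varepsilon}{c_{j_1,j_2}-u_{j_1,1}-u_{j_2,2}}$, lies in $\mathrm{V}_o(P)$ and is the minimizer in the definition of $\tau_\beta(C,P,\varepsilon)$.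
   Context: $\mathbf{1}_n$ is the all-ones vector in $\mathbb{R}^n$; $\mathbb{R}^n_{++}$ is the set of entrywise positive vectors. For $P=(\mathbf{p}_1,\mathbf{p}_2)$, $\mathrm{V}(P)=\{V\in\mathbb{R}^{n_1\times n_2}_+:\ V\mathbf{1}_{n_2}=\mathbf{p}_1,\ V^\top\mathbf{1}_{n_1}=\mathbf{p}_2\}$ and $\mathrm{V}_o(P)$ is the set of entrywise positive matrices in $\mathrm{V}(P)$. For $V\in\mathbb{R}^{n_1\times n_2}_{++}$, $\beta(V)=-\sum_{j_1,j_2}\log v_{j_1,j_2}$, and $\tau_\beta(C,P,\varepsilon)=\min_{V\in\mathrm{V}_o(P)}\big(\operatorname{tr}C^\top V+\varepsilon\beta(V)\big)$. *)

From HB Require Import structures.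
From mathcomp Require Import all_boot all_order all_algebra.
From mathcomp Require Import reals exp.
Set Implicit Arguments. Unset Strict Implicit. Unset Printing Implicit Defensive.
Import Order.TTheory GRing.Theory Num.Theory.
Local Open Scope ring_scope.

Section Defs.
Variable R : realType.

Definition sumv (n : nat) (p : 'cV[R]_n) : R := \sum_(i < n) p i ord0.

Definition Vset (n1 n2 : nat) (p1 : 'cV[R]_n1) (p2 : 'cV[R]_n2)
  (V : 'M[R]_(n1, n2)) : Prop :=
  (forall i j, 0 <= V i j) /\
  V *m (const_mx 1 : 'cV[R]_n2) = p1 /\ V^T *m (const_mx 1 : 'cV[R]_n1) = p2.

Definition Voset (n1 n2 : nat) (p1 : 'cV[R]_n1) (p2 : 'cV[R]_n2)
  (V : 'M[R]_(n1, n2)) : Prop :=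
  Vset p1 p2 V /\ (forall i j, 0 < V i j).

Definition beta (n1 n2 : nat) (V : 'M[R]_(n1, n2)) : R :=
  - \sum_(i < n1) \sum_(j < n2) ln (V i j).

Definition tau_obj (n1 n2 : nat) (C : 'M[R]_(n1, n2)) (eps : R)
  (V : 'M[R]_(n1, n2)) : R := \tr (C^T *m V) + eps * beta V.

Definition Cxy (n1 n2 : nat) (C : 'M[R]_(n1, n2)) (x : 'cV[R]_n1)
  (y : 'cV[R]_n2) : 'M[R]_(n1, n2) :=
  C - x *m (const_mx 1 : 'rV[R]_n2) - (const_mx 1 : 'cV[R]_n1) *m y^T.

Definition Dhat (n1 n2 : nat) (C : 'M[R]_(n1, n2))
  (z : 'cV[R]_n1 * 'cV[R]_n2) : Prop :=
  forall i j, 0 < Cxy C z.1 z.2 i j.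

Definition Dset (n1 n2 : nat) (C : 'M[R]_(n1, n2))
  (z : 'cV[R]_n1 * 'cV[R]_n2) : Prop :=
  Dhat C z /\ sumv z.1 - sumv z.2 = 0.

Definition betaC (n1 n2 : nat) (C : 'M[R]_(n1, n2))
  (z : 'cV[R]_n1 * 'cV[R]_n2) : R :=
  - \sum_(i < n1) \sum_(j < n2) ln (C i j - z.1 i ord0 - z.2 j ord0).

Definition phi (n1 n2 : nat) (p1 : 'cV[R]_n1) (p2 : 'cV[R]_n2) (eps : R)
  (C : 'M[R]_(n1, n2)) (z : 'cV[R]_n1 * 'cV[R]_n2) : R :=
  \sum_(i < n1) p1 i ord0 * z.1 i ord0 + \sum_(j < n2) p2 j ord0 * z.2 j ord0
  - eps * betaC C z + (n1 * n2)%:R * eps * (1 - ln eps).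

Definition pcomb (n1 n2 : nat) (t : R) (z w : 'cV[R]_n1 * 'cV[R]_n2) :=
  (t *: z.1 + (1 - t) *: w.1, t *: z.2 + (1 - t) *: w.2).

Definition concave_on (n1 n2 : nat) (S : 'cV[R]_n1 * 'cV[R]_n2 -> Prop)
  (f : 'cV[R]_n1 * 'cV[R]_n2 -> R) : Prop :=
  forall z w, S z -> S w -> forall t, 0 <= t <= 1 ->
    t * f z + (1 - t) * f w <= f (pcomb t z w).

Definition strictly_concave_on (n1 n2 : nat) (S : 'cV[R]_n1 * 'cV[R]_n2 -> Prop)
  (f : 'cV[R]_n1 * 'cV[R]_n2 -> R) : Prop :=
  forall z w, S z -> S w -> z <> w -> forall t, 0 < t < 1 ->
    t * f z + (1 - t) * f w < f (pcomb t z w).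

Definition is_max (T : Type) (S : T -> Prop) (f : T -> R) (m : R) : Prop :=
  (exists2 z, S z & f z = m) /\ (forall z, S z -> f z <= m).

Definition is_min (T : Type) (S : T -> Prop) (f : T -> R) (m : R) : Prop :=
  (exists2 z, S z & f z = m) /\ (forall z, S z -> m <= f z).

Definition Umat (n1 n2 : nat) (C : 'M[R]_(n1, n2)) (eps : R)
  (z : 'cV[R]_n1 * 'cV[R]_n2) : 'M[R]_(n1, n2) :=
  \matrix_(i, j) (eps / (C i j - z.1 i ord0 - z.2 j ord0)).

Definition Lline (n1 n2 : nat) (u : 'cV[R]_n1 * 'cV[R]_n2)
  (z : 'cV[R]_n1 * 'cV[R]_n2) : Prop :=
  exists t : R, z = (u.1 + t *: const_mx 1, u.2 - t *: const_mx 1).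

End Defs.

From HB Require Import structures.
From mathcomp Require Import all_boot all_order all_algebra.
From mathcomp Require Import reals exp.
From mathcomp Require Import boolp classical_sets sequences topology normedtype derive.
From mathcomp Require Import ring lra.
Import Order.TTheory GRing.Theory Num.Theory.
Import numFieldNormedType.Exports.
Local Open Scope ring_scope.
Set Implicit Arguments. Unset Strict Implicit. Unset Printing Implicit Defensive.

(* Write a_ij = c_ij - x_i - y_j for the slacks of (x, y).  For V in V_o(P) the marginal
   constraints turn tr(C^T V) - p1^T x - p2^T y into sum_ij v_ij a_ij, so that
     tr(C^T V) + eps beta(V) - phi(x, y) = sum_ij h(v_ij a_ij),
     h(s) = s - eps ln s - eps + eps ln eps = eps (s/eps - 1 - ln (s/eps)) >= 0,
   with equality iff s = eps.  Hence phi <= tau_obj everywhere, with equality exactly when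
   V = U(x, y) = [eps / a_ij]; everything reduces to finding one (x, y) with U(x, y) in
   V_o(P).  Comparing with the independent coupling p1 p2^T / 1^T p1 bounds the slacks on a
   superlevel set of phi away from 0 and oo, so phi attains its maximum over a compact box
   of slacks in its interior, and the one-sided first-order conditions at that maximiser
   are precisely the row and column constraints of U.  Since phi depends on (x, y) only
   through the slacks and p1^T x + p2^T y, it is constant along (1, -1); concavity is that
   of ln. *)

Section LogInequalities.
Variable R : realType.
Implicit Types a b m s t eps : R.

Lemma ln_le_subr1 (x : R) : 0 < x -> ln x <= x - 1.
Proof. by move=> x0; have := expR_ge1Dx (ln x); rewrite lnK ?posrE //; lra. Qed.

Lemma ln_lt_subr1 (x : R) : 0 < x -> x != 1 -> ln x < x - 1.
Proof.
move=> x0 x1; have /expR_gt1Dx : ln x != 0 by rewrite ln_eq0.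
by rewrite lnK ?posrE //; lra.
Qed.

Lemma ln_le_tangent a m : 0 < a -> 0 < m -> ln a - ln m <= a / m - 1.
Proof. by move=> a0 m0; rewrite -ln_div ?posrE //; apply: ln_le_subr1; exact: divr_gt0. Qed.

Lemma ln_lt_tangent a m : 0 < a -> 0 < m -> a != m -> ln a - ln m < a / m - 1.
Proof.
move=> a0 m0 am; rewrite -ln_div ?posrE //; apply: ln_lt_subr1; first exact: divr_gt0.
by apply: contra am => /eqP/divr1_eq ->.
Qed.

Lemma convex_comb_gt0 a b t : 0 < a -> 0 < b -> 0 <= t <= 1 -> 0 < t * a + (1 - t) * b.
Proof. by move=> a0 b0 /andP[t0 t1]; nra. Qed.

(* Summing the tangent inequalities at m = t a + (1 - t) b, the right-hand sides cancel. *)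
Lemma ln_concave a b t : 0 < a -> 0 < b -> 0 <= t <= 1 ->
  t * ln a + (1 - t) * ln b <= ln (t * a + (1 - t) * b).
Proof.
move=> a0 b0 t01; have m0 := convex_comb_gt0 a0 b0 t01.
set m := t * a + (1 - t) * b in m0 *; case/andP: t01 => t0 t1.
have ha := ln_le_tangent a0 m0; have hb := ln_le_tangent b0 m0.
have : t * (a / m - 1) + (1 - t) * (b / m - 1) = m / m - 1 by rewrite /m; ring.
rewrite divff ?lt0r_neq0 // subrr.
nra.
Qed.

Lemma ln_strictly_concave a b t : 0 < a -> 0 < b -> a != b -> 0 < t < 1 ->
  t * ln a + (1 - t) * ln b < ln (t * a + (1 - t) * b).
Proof.
move=> a0 b0 ab /andP[t0 t1].
have m0 : 0 < t * a + (1 - t) * b by apply: convex_comb_gt0 => //; lra.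
set m := t * a + (1 - t) * b in m0 *.
have am : a != m.
  apply: contra ab => /eqP am.
  have : (1 - t) * (b - a) = m - a by rewrite /m; ring.
  by rewrite -am subrr => /eqP; rewrite mulf_eq0 subr_eq0 (gt_eqF t1) subr_eq0 eq_sym.
have ha := ln_lt_tangent a0 m0 am; have hb := ln_le_tangent b0 m0.
have : t * (a / m - 1) + (1 - t) * (b / m - 1) = m / m - 1 by rewrite /m; ring.
rewrite divff ?lt0r_neq0 // subrr.
nra.
Qed.

Definition entropic_gap eps s := s - eps * ln s - eps + eps * ln eps.

Lemma entropic_gapE eps s : 0 < eps -> 0 < s ->
  entropic_gap eps s = eps * (s / eps - 1 - ln (s / eps)).
Proof. by move=> e0 s0; rewrite /entropic_gap ln_div ?posrE //; field; exact: lt0r_neq0. Qed.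

Lemma entropic_gap_ge0 eps s : 0 < eps -> 0 < s -> 0 <= entropic_gap eps s.
Proof.
move=> e0 s0; rewrite entropic_gapE // mulr_ge0 ?(ltW e0) //.
by have := ln_le_subr1 (divr_gt0 s0 e0); lra.
Qed.

Lemma entropic_gap_eq0 eps s : 0 < eps -> 0 < s -> entropic_gap eps s = 0 -> s = eps.
Proof.
move=> e0 s0; rewrite entropic_gapE // => /eqP; rewrite mulf_eq0 gt_eqF //= => /eqP gap0.
have [/divr1_eq //|s1] := eqVneq (s / eps) 1.
by have := ln_lt_subr1 (divr_gt0 s0 e0) s1; lra.
Qed.

Lemma entropic_gap_le_bounds eps B s : 0 < eps -> 0 < s -> entropic_gap eps s <= B ->
  eps * expR (- ((B + eps) / eps)) <= s <= 2 * (B + eps).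
Proof.
move=> e0 s0; rewrite entropic_gapE // => gapB.
have x0 := divr_gt0 s0 e0; set x := s / eps in x0 gapB.
have sE : s = eps * x by rewrite /x mulrC divfK ?lt0r_neq0.
have half : ln x <= x / 2.
  have := ln_le_subr1 (divr_gt0 x0 (ltr0Sn R 1)); have := ln_le_subr1 (ltr0Sn R 1).
  by rewrite ln_div ?posrE //; lra.
have lnx : - ((B + eps) / eps) <= ln x.
  by rewrite lerNl ler_pdivlMr // -[_ * eps]mulrC; nra.
rewrite sE ler_pM2l // -[X in _ <= X]lnK ?posrE // ler_expR lnx /=; nra.
Qed.

End LogInequalities.

Section DualObjective.
Variables (R : realType) (n1 n2 : nat) (C : 'M[R]_(n1, n2)) (eps : R).
Variables (p1 : 'cV[R]_n1) (p2 : 'cV[R]_n2).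
Hypothesis eps_gt0 : 0 < eps.
Implicit Types (z w : 'cV[R]_n1 * 'cV[R]_n2) (V : 'M[R]_(n1, n2)).

Definition slack z i j := C i j - z.1 i ord0 - z.2 j ord0.

Lemma Dhat_slack z : Dhat C z <-> forall i j, 0 < slack z i j.
Proof.
suff E i j : Cxy C z.1 z.2 i j = slack z i j by split=> H i j; move: (H i j); rewrite E.
by rewrite !mxE !big_ord1 !mxE mulr1 mul1r.
Qed.

Lemma Umat_slack z i j : Umat C eps z i j = eps / slack z i j.
Proof. by rewrite mxE. Qed.

Lemma phiE z : phi p1 p2 eps C z =
  \sum_i p1 i ord0 * z.1 i ord0 + \sum_j p2 j ord0 * z.2 j ord0
  + eps * \sum_i \sum_j ln (slack z i j) + (n1 * n2)%:R * eps * (1 - ln eps).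
Proof. by rewrite /phi /betaC mulrN opprK. Qed.

Lemma row_sumE V i : (V *m (const_mx 1 : 'cV[R]_n2)) i ord0 = \sum_j V i j.
Proof. by rewrite mxE; apply: eq_bigr => j _; rewrite mxE mulr1. Qed.

Lemma col_sumE V j : (V^T *m (const_mx 1 : 'cV[R]_n1)) j ord0 = \sum_i V i j.
Proof. by rewrite mxE; apply: eq_bigr => i _; rewrite !mxE mulr1. Qed.

Lemma tau_obj_subr_phi V z : Vset p1 p2 V -> (forall i j, 0 < V i j) -> Dhat C z ->
  tau_obj C eps V - phi p1 p2 eps C z =
  \sum_i \sum_j entropic_gap eps (V i j * slack z i j).
Proof.
move=> [_ [rowV colV]] Vpos /Dhat_slack Dz.
have trE : \tr (C^T *m V) = \sum_i \sum_j C i j * V i j.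
  rewrite /mxtrace exchange_big; apply: eq_bigr => j _.
  by rewrite mxE; apply: eq_bigr => i _; rewrite mxE.
have xE : \sum_i p1 i ord0 * z.1 i ord0 = \sum_i \sum_j V i j * z.1 i ord0.
  by apply: eq_bigr => i _; rewrite -rowV row_sumE mulr_suml.
have yE : \sum_j p2 j ord0 * z.2 j ord0 = \sum_i \sum_j V i j * z.2 j ord0.
  by rewrite exchange_big; apply: eq_bigr => j _; rewrite -colV col_sumE mulr_suml.
have cstE : (n1 * n2)%:R * eps * (1 - ln eps) = \sum_(i < n1) \sum_(j < n2) eps * (1 - ln eps).
  by rewrite pair_big sumr_const card_prod !card_ord -mulrA mulr_natl.
rewrite phiE /tau_obj /beta trE xE yE cstE !pair_big /=.
rewrite [RHS](eq_bigr (fun k => C k.1 k.2 * V k.1 k.2 - V k.1 k.2 * z.1 k.1 ord0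
  - V k.1 k.2 * z.2 k.2 ord0 - eps * ln (V k.1 k.2) - eps * ln (slack z k.1 k.2)
  - eps * (1 - ln eps))); last first.
  by move=> [i j] _; rewrite /entropic_gap lnM ?posrE // /slack /=; ring.
by rewrite !sumrB -!mulr_sumr; ring.
Qed.

Lemma phi_le_tau_obj V z : Voset p1 p2 V -> Dhat C z ->
  phi p1 p2 eps C z <= tau_obj C eps V.
Proof.
move=> [VV Vpos] Dz; rewrite -subr_ge0 tau_obj_subr_phi //.
apply: sumr_ge0 => i _; apply: sumr_ge0 => j _; apply: entropic_gap_ge0 => //.
by apply: mulr_gt0 => //; move/Dhat_slack: Dz.
Qed.

Lemma tau_obj_eq_phi V z : Voset p1 p2 V -> Dhat C z ->
  tau_obj C eps V = phi p1 p2 eps C z -> V = Umat C eps z.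
Proof.
move=> [VV Vpos] Dz tauE; have Dz' := (Dhat_slack z).1 Dz.
have Vs_gt0 i j : 0 < V i j * slack z i j by apply: mulr_gt0.
have := tau_obj_subr_phi VV Vpos Dz; rewrite tauE subrr pair_big => /esym gap0.
apply/matrixP => i j; rewrite Umat_slack.
have /entropic_gap_eq0 : entropic_gap eps (V i j * slack z i j) = 0.
  by apply: (psumr_eq0P _ gap0 (i := (i, j))) => // k _; exact: entropic_gap_ge0.
by move=> /(_ eps_gt0 (Vs_gt0 i j)) <-; rewrite mulfK ?lt0r_neq0.
Qed.

Lemma tau_obj_Umat z : Dhat C z -> Voset p1 p2 (Umat C eps z) ->
  tau_obj C eps (Umat C eps z) = phi p1 p2 eps C z.
Proof.
move=> Dz [VU Upos]; apply/eqP; rewrite -subr_eq0 tau_obj_subr_phi //.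
apply/eqP/big1 => i _; apply/big1 => j _.
rewrite Umat_slack divfK ?lt0r_neq0 //; last exact: (Dhat_slack z).1.
by rewrite /entropic_gap; ring.
Qed.

Definition shift z t : 'cV[R]_n1 * 'cV[R]_n2 :=
  (z.1 + t *: const_mx 1, z.2 - t *: const_mx 1).

Lemma shift0 z : shift z 0 = z.
Proof. by case: z => x y; rewrite /shift /= !scale0r addr0 subr0. Qed.

Lemma slack_shift z t i j : slack (shift z t) i j = slack z i j.
Proof. by rewrite /slack /= !mxE; ring. Qed.

Lemma Umat_shift z t : Umat C eps (shift z t) = Umat C eps z.
Proof. by apply/matrixP => i j; rewrite !Umat_slack slack_shift. Qed.

Lemma Dhat_shift z t : Dhat C (shift z t) <-> Dhat C z.
Proof. by rewrite !Dhat_slack; split=> H i j; move: (H i j); rewrite slack_shift. Qed.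

Lemma sumv_shift z t : sumv (shift z t).1 - sumv (shift z t).2 =
  sumv z.1 - sumv z.2 + (n1 + n2)%:R * t.
Proof.
rewrite /sumv /= (eq_bigr (fun i => z.1 i ord0 + t)) => [|i _]; last by rewrite !mxE mulr1.
rewrite [X in _ - X](eq_bigr (fun j => z.2 j ord0 - t)) => [|j _]; last by rewrite !mxE mulr1.
by rewrite big_split sumrB /= !sumr_const !card_ord natrD; ring.
Qed.

Lemma phi_shift z t : sumv p1 = sumv p2 -> phi p1 p2 eps C (shift z t) = phi p1 p2 eps C z.
Proof.
move=> sum_p; rewrite !phiE.
under [\sum_i \sum_j _]eq_bigr do under eq_bigr do rewrite slack_shift.
rewrite (eq_bigr (fun i => p1 i ord0 * z.1 i ord0 + p1 i ord0 * t)) => [|i _]; last first.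
  by rewrite !mxE mulr1 mulrDr.
rewrite [X in _ + X + _ + _](eq_bigr (fun j => p2 j ord0 * z.2 j ord0 - p2 j ord0 * t)) => [|j _];
  last by rewrite !mxE mulr1 mulrBr.
by rewrite big_split sumrB /= -!mulr_suml -/(sumv p1) -/(sumv p2) sum_p; ring.
Qed.

Section NonemptyIndices.
Variables (i0 : 'I_n1) (j0 : 'I_n2).

Lemma slack_eq_shift z w : (forall i j, slack z i j = slack w i j) ->
  z = shift w (z.1 i0 ord0 - w.1 i0 ord0).
Proof.
case: z => x y; case: w => x' y' /= E; rewrite /shift /=.
congr pair; apply/matrixP => i k; rewrite (ord1 k) !mxE mulr1.
  by have := E i j0; have := E i0 j0; rewrite /slack /=; lra.
by have := E i0 i; rewrite /slack /=; lra.
Qed.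

Lemma Dset_slack_inj z w : Dset C z -> Dset C w ->
  (forall i j, slack z i j = slack w i j) -> z = w.
Proof.
move=> [_ sum_z] [_ sum_w] /slack_eq_shift zE; move: sum_z.
rewrite zE sumv_shift sum_w add0r => /eqP; rewrite mulf_eq0 pnatr_eq0 addn_eq0 eqn0Ngt.
by rewrite (leq_ltn_trans (leq0n i0) (ltn_ord i0)) /= => /eqP ->; rewrite shift0.
Qed.

Lemma Dset_shift_balance z : Dhat C z ->
  Dset C (shift z ((sumv z.2 - sumv z.1) / (n1 + n2)%:R)).
Proof.
move=> Dz; split; first exact/Dhat_shift.
rewrite sumv_shift mulrC divfK ?subrKA ?subrr //.
by rewrite pnatr_eq0 addn_eq0 eqn0Ngt (leq_ltn_trans (leq0n i0) (ltn_ord i0)).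
Qed.

End NonemptyIndices.

Definition slack_comb_gap t z w i j :=
  ln (t * slack z i j + (1 - t) * slack w i j)
  - (t * ln (slack z i j) + (1 - t) * ln (slack w i j)).

Lemma phi_pcomb t z w : phi p1 p2 eps C (pcomb t z w)
  - (t * phi p1 p2 eps C z + (1 - t) * phi p1 p2 eps C w) =
  eps * \sum_i \sum_j slack_comb_gap t z w i j.
Proof.
have lin n (p x x' : 'cV[R]_n) : \sum_i p i ord0 * (t *: x + (1 - t) *: x') i ord0 =
    t * \sum_i p i ord0 * x i ord0 + (1 - t) * \sum_i p i ord0 * x' i ord0.
  by rewrite !mulr_sumr -big_split; apply: eq_bigr => i _; rewrite !mxE /=; ring.
have slackE i j : slack (pcomb t z w) i j = t * slack z i j + (1 - t) * slack w i j.
  by rewrite /slack /= !mxE; ring.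
rewrite !phiE /pcomb /= !lin; under eq_bigr do under eq_bigr do rewrite slackE.
rewrite /slack_comb_gap !pair_big /= sumrB big_split /= -!mulr_sumr; ring.
Qed.

Lemma concave_phi : concave_on (Dhat C) (phi p1 p2 eps C).
Proof.
move=> z w /Dhat_slack Dz /Dhat_slack Dw t t01; rewrite -subr_ge0 phi_pcomb.
apply: mulr_ge0; first exact: ltW.
by apply: sumr_ge0 => i _; apply: sumr_ge0 => j _; rewrite subr_ge0 ln_concave.
Qed.

Lemma strictly_concave_phi : (0 < n1)%N -> (0 < n2)%N ->
  strictly_concave_on (Dset C) (phi p1 p2 eps C).
Proof.
move=> n1_gt0 n2_gt0 z w Dz Dw zw t t01.
have [/Dhat_slack Dz' /Dhat_slack Dw'] := (Dz.1, Dw.1).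
have t01' : 0 <= t <= 1 by case/andP: t01 => t0 t1; rewrite !ltW.
have gap_ge0 k : 0 <= slack_comb_gap t z w k.1 k.2 by rewrite subr_ge0 ln_concave.
rewrite -subr_gt0 phi_pcomb pmulr_rgt0 // pair_big lt_def sumr_ge0 // andbT.
apply: contra_notN zw => /eqP gap0.
apply: (Dset_slack_inj (Ordinal n1_gt0) (Ordinal n2_gt0)) => // i j.
apply/eqP/negPn/negP => zw_ij.
have /eqP := psumr_eq0P (fun k _ => gap_ge0 k) gap0 (i := (i, j)) isT.
by rewrite gt_eqF // subr_gt0 ln_strictly_concave.
Qed.

End DualObjective.

Section FirstOrderCondition.
Variable R : realType.

Lemma le_of_le_addr_small (x y K al : R) : 0 < al ->
  (forall t, 0 < t <= al -> x <= y + t * K) -> x <= y.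
Proof.
move=> al_gt0 small; apply/ler_addgt0Pr => e e_gt0.
have [K_le0|K_gt0] := leP K 0.
  by have := small al; rewrite al_gt0 lexx => /(_ isT); nra.
set t := Num.min al (e / K).
have t_gt0 : 0 < t by rewrite lt_min al_gt0 divr_gt0.
have /(small t) : 0 < t <= al by rewrite t_gt0 ge_min lexx.
have : t * K <= e by rewrite -ler_pdivlMr // ge_min lexx orbT.
lra.
Qed.

(* The hypothesis is what the concavity of ln yields at a maximiser of
   t |-> t p + eps * \sum_j ln (a j - t) on [-al, al]; letting t tend to 0 from either
   side gives the stationarity equation. *)
Lemma sum_inv_eq_of_stationary (J : finType) (a : J -> R) (p eps al : R) :
  0 < eps -> 0 < al -> (forall j, 2 * al <= a j) ->
  (forall t, - al <= t <= al -> t * (p - \sum_j eps / (a j - t)) <= 0) ->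
  \sum_j eps / a j = p.
Proof.
move=> eps_gt0 al_gt0 a_ge stat.
set K := #|J|%:R * (eps / al ^+ 2).
have expand t : - al <= t <= al -> exists2 h, 0 <= h <= K &
    \sum_j eps / (a j - t) = \sum_j eps / a j + t * h.
  move=> /andP[tl tr]; exists (\sum_j eps / (a j * (a j - t))).
    rewrite sumr_ge0 => [|j _]; last by apply: divr_ge0; [exact: ltW | have := a_ge j; nra].
    rewrite /K mulr_natl -[_ *+ _]sumr_const; apply: ler_sum => j _.
    have := a_ge j => aj.
    rewrite ler_pM2l // lef_pV2 ?posrE ?exprn_gt0 // ?expr2; nra.
  rewrite mulr_sumr -big_split; apply: eq_bigr => j _ /=.
  have := a_ge j => aj; field.
  by rewrite !lt0r_neq0 //; lra.
apply/eqP; rewrite eq_le; apply/andP; split.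
- apply: (@le_of_le_addr_small _ _ K al) => // s /andP[s_gt0 s_le].
  have s_in : - al <= - s <= al by apply/andP; split; lra.
  have [h /andP[h_ge0 h_le] gE] := expand _ s_in.
  by have := stat _ s_in; rewrite gE; nra.
- apply: (@le_of_le_addr_small _ _ K al) => // s /andP[s_gt0 s_le].
  have s_in : - al <= s <= al by apply/andP; split; lra.
  have [h /andP[h_ge0 h_le] gE] := expand _ s_in.
  by have := stat _ s_in; rewrite gE; nra.
Qed.

End FirstOrderCondition.

Section RowStationarity.
Variables (R : realType) (n1 n2 : nat) (C : 'M[R]_(n1, n2)) (eps : R).
Variables (p1 : 'cV[R]_n1) (p2 : 'cV[R]_n2).
Hypothesis eps_gt0 : 0 < eps.
Implicit Types (z : 'cV[R]_n1 * 'cV[R]_n2).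

Definition movex z i t : 'cV[R]_n1 * 'cV[R]_n2 := (z.1 + t *: delta_mx i ord0, z.2).

Lemma slack_movex z i t k j : slack C (movex z i t) k j = slack C z k j - t * (k == i)%:R.
Proof. by rewrite /slack /= !mxE eqxx andbT; ring. Qed.

Lemma phi_movex z i t : phi p1 p2 eps C (movex z i t) - phi p1 p2 eps C z =
  t * p1 i ord0 + eps * \sum_j (ln (slack C z i j - t) - ln (slack C z i j)).
Proof.
have linE : \sum_k p1 k ord0 * (movex z i t).1 k ord0 =
    \sum_k p1 k ord0 * z.1 k ord0 + t * p1 i ord0.
  rewrite (eq_bigr (fun k => p1 k ord0 * z.1 k ord0 + t * p1 k ord0 * (k == i)%:R)) => [|k _];
    last by rewrite !mxE eqxx andbT; ring.
  rewrite big_split /=; congr (_ + _).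
  by under eq_bigr do rewrite mulr_natr mulrb; rewrite -big_mkcond big_pred1_eq.
have lnE : \sum_k \sum_j ln (slack C (movex z i t) k j) = \sum_k \sum_j ln (slack C z k j)
    + \sum_j (ln (slack C z i j - t) - ln (slack C z i j)).
  rewrite (bigD1 i) //= [X in _ = X + _](bigD1 i) //= sumrB.
  under eq_bigr do rewrite slack_movex eqxx mulr1.
  rewrite [X in _ + X](eq_bigr (fun k => \sum_j ln (slack C z k j))) => [|k /negbTE ki];
    last by apply: eq_bigr => j _; rewrite slack_movex ki mulr0 subr0.
  ring.
by rewrite !phiE linE lnE; ring.
Qed.

Lemma row_sum_of_max z i al : 0 < al -> Dhat C z -> (forall j, 2 * al <= slack C z i j) ->
  (forall t, - al <= t <= al -> phi p1 p2 eps C (movex z i t) <= phi p1 p2 eps C z) ->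
  \sum_j eps / slack C z i j = p1 i ord0.
Proof.
move=> al_gt0 Dz a_ge z_max; apply: (sum_inv_eq_of_stationary eps_gt0 al_gt0 a_ge) => t t_in.
have max_t := z_max t t_in; rewrite -subr_le0 phi_movex in max_t; apply: le_trans max_t.
rewrite mulrBr lerD2l !mulr_sumr -sumrN; apply: ler_sum => j _.
have aj := a_ge j; have aj_gt0 : 0 < slack C z i j by lra.
have ajt_gt0 : 0 < slack C z i j - t by case/andP: t_in; lra.
have tangent := ln_le_tangent aj_gt0 ajt_gt0.
have tE : slack C z i j / (slack C z i j - t) - 1 = t / (slack C z i j - t).
  by field; exact: lt0r_neq0.
rewrite tE in tangent.
by rewrite mulrCA -mulrN ler_pM2l //; lra.
Qed.

End RowStationarity.

Definition movey (R : realType) (n1 n2 : nat) (z : 'cV[R]_n1 * 'cV[R]_n2) j t :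
  'cV[R]_n1 * 'cV[R]_n2 := (z.1, z.2 + t *: delta_mx j ord0).

Lemma slack_movey (R : realType) (n1 n2 : nat) (C : 'M[R]_(n1, n2)) z j t i l :
  slack C (movey z j t) i l = slack C z i l - t * (l == j)%:R.
Proof. by rewrite /slack /= !mxE eqxx andbT; ring. Qed.

Section Transposition.
Variables (R : realType) (n1 n2 : nat) (C : 'M[R]_(n1, n2)) (eps : R).
Variables (p1 : 'cV[R]_n1) (p2 : 'cV[R]_n2).
Implicit Types (z : 'cV[R]_n1 * 'cV[R]_n2).

Lemma slack_tr z i j : slack C^T (z.2, z.1) j i = slack C z i j.
Proof. by rewrite /slack mxE; ring. Qed.

Lemma Dhat_tr z : Dhat C^T (z.2, z.1) <-> Dhat C z.
Proof. by rewrite !Dhat_slack; split=> H i j; have := H j i; rewrite slack_tr. Qed.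

Lemma phi_tr z : phi p2 p1 eps C^T (z.2, z.1) = phi p1 p2 eps C z.
Proof.
have lnE : \sum_j \sum_i ln (slack C^T (z.2, z.1) j i) = \sum_i \sum_j ln (slack C z i j).
  by rewrite exchange_big; apply: eq_bigr => i _; apply: eq_bigr => j _; rewrite slack_tr.
by rewrite !phiE lnE mulnC /=; ring.
Qed.

Lemma col_sum_of_max z j al : 0 < eps -> 0 < al -> Dhat C z ->
  (forall i, 2 * al <= slack C z i j) ->
  (forall t, - al <= t <= al -> phi p1 p2 eps C (movey z j t) <= phi p1 p2 eps C z) ->
  \sum_i eps / slack C z i j = p2 j ord0.
Proof.
move=> eps_gt0 al_gt0 /Dhat_tr Dz a_ge z_max.
under eq_bigr do rewrite -slack_tr.
apply: (@row_sum_of_max _ _ _ C^T eps p2 p1 eps_gt0 _ _ _ al_gt0 Dz) => [i|t t_in].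
  by rewrite slack_tr.
by rewrite phi_tr (_ : (movex _ _ _) = ((movey z j t).2, (movey z j t).1)) // phi_tr z_max.
Qed.

End Transposition.

Section Compactness.
Variable R : realType.
Local Open Scope classical_set_scope.
Local Open Scope ring_scope.

Lemma continuous_sum_at (T : topologicalType) (I : finType) (f : I -> T -> R) x :
  (forall i, {for x, continuous (f i)}) -> {for x, continuous (fun y => \sum_i f i y)}.
Proof. by move=> fx; apply: cvg_big => // [|i _]; [exact: add_continuous | exact: fx]. Qed.

Lemma bounded_closed_max_rV N (A : set 'rV[R]_N) (F : 'rV[R]_N -> R) (M : R) :
  A !=set0 -> closed A -> (forall v, A v -> forall k, `|v ord0 k| <= M) ->
  (forall v, A v -> {for v, continuous F}) ->
  exists2 c, A c & forall v, A v -> F v <= F c.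
Proof.
move=> A0 A_closed A_bounded F_cont.
have A_compact : compact A.
  apply: (subclosed_compact A_closed (@rV_compact _ N (fun=> `[(- M), M]%classic) _)).
    by move=> _; exact: segment_compact.
  by move=> v Av k /=; rewrite in_itv /= -ler_norml; exact: A_bounded.
have F_cont' : {within A, continuous F}.
  by apply: continuous_in_subspaceT => v; rewrite inE; exact: F_cont.
have [c Ac c_max] := EVT_max_rV A0 A_compact F_cont'.
by exists c; [rewrite -inE | move=> v Av; apply: c_max; rewrite inE].
Qed.

End Compactness.

Lemma Voset_Umat_of_sums (R : realType) (n1 n2 : nat) (C : 'M[R]_(n1, n2)) (eps : R)
    (p1 : 'cV[R]_n1) (p2 : 'cV[R]_n2) (z : 'cV[R]_n1 * 'cV[R]_n2) :
  0 < eps -> Dhat C z ->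
  (forall i, \sum_j eps / slack C z i j = p1 i ord0) ->
  (forall j, \sum_i eps / slack C z i j = p2 j ord0) ->
  Voset p1 p2 (Umat C eps z).
Proof.
move=> eps_gt0 /Dhat_slack Dz rows cols.
have U_gt0 i j : 0 < Umat C eps z i j by rewrite Umat_slack divr_gt0.
split=> //; split; first by move=> i j; exact: ltW.
split; apply/matrixP => k l; rewrite (ord1 l).
  by rewrite row_sumE -rows; apply: eq_bigr => j _; rewrite Umat_slack.
by rewrite col_sumE -cols; apply: eq_bigr => i _; rewrite Umat_slack.
Qed.

Section Existence.
Variables (R : realType) (n1 n2 : nat) (C : 'M[R]_(n1, n2)) (eps : R).
Variables (p1 : 'cV[R]_n1) (p2 : 'cV[R]_n2).
Hypotheses (eps_gt0 : 0 < eps) (p1_gt0 : forall i, 0 < p1 i ord0).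
Hypotheses (p2_gt0 : forall j, 0 < p2 j ord0) (sum_p : sumv p1 = sumv p2).
Variables (i0 : 'I_n1) (j0 : 'I_n2).
Local Open Scope classical_set_scope.
Local Open Scope ring_scope.
Implicit Types (z : 'cV[R]_n1 * 'cV[R]_n2).

Definition indep_coupling : 'M[R]_(n1, n2) :=
  \matrix_(i, j) (p1 i ord0 * p2 j ord0 / sumv p1).

Lemma sumv_p1_gt0 : 0 < sumv p1.
Proof. by rewrite /sumv (bigD1 i0) //= ltr_pwDl // sumr_ge0 // => i _; exact: ltW. Qed.

Lemma indep_coupling_gt0 i j : 0 < indep_coupling i j.
Proof. by rewrite mxE divr_gt0 ?mulr_gt0 ?sumv_p1_gt0. Qed.

Lemma Voset_indep_coupling : Voset p1 p2 indep_coupling.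
Proof.
have S_neq0 := lt0r_neq0 sumv_p1_gt0.
split; last exact: indep_coupling_gt0.
split; first by move=> i j; exact: ltW (indep_coupling_gt0 i j).
split; apply/matrixP => k l; rewrite (ord1 l).
  rewrite row_sumE; under eq_bigr do rewrite mxE.
  by rewrite -mulr_suml -mulr_sumr -/(sumv p2) -sum_p; apply: mulfK.
rewrite col_sumE; under eq_bigr do rewrite mxE mulrAC mulrC.
by rewrite -mulr_sumr -mulr_suml -/(sumv p1) divff // mulr1.
Qed.

Lemma slack_bounds_of_phi_ge m : exists2 al, 0 < al & exists be, forall z,
  Dhat C z -> m <= phi p1 p2 eps C z -> forall i j, 2 * al <= slack C z i j <= be.
Proof.
pose V := indep_coupling; have [V_set V_gt0] := Voset_indep_coupling.
pose B := tau_obj C eps V - m.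
pose lo := eps * expR (- ((B + eps) / eps)); pose hi := 2 * (B + eps).
have lo_gt0 : 0 < lo by rewrite mulr_gt0 ?expR_gt0.
pose al := \big[Num.min/1]_(k : 'I_n1 * 'I_n2) (lo / V k.1 k.2) / 2.
pose be := \big[Num.max/0]_(k : 'I_n1 * 'I_n2) (hi / V k.1 k.2).
exists al; first by rewrite divr_gt0 // lt_bigmin // => k _; rewrite divr_gt0.
exists be => z Dz phi_ge i j.
have slack_gt0 : 0 < slack C z i j by move/Dhat_slack: Dz.
have gap_le : entropic_gap eps (V i j * slack C z i j) <= B.
  have gap_ge0 (k : 'I_n1 * 'I_n2) : 0 <= entropic_gap eps (V k.1 k.2 * slack C z k.1 k.2).
    by apply: entropic_gap_ge0; rewrite // mulr_gt0 //; move/Dhat_slack: Dz.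
  have : tau_obj C eps V - phi p1 p2 eps C z <= B by rewrite lerD2l lerN2.
  rewrite tau_obj_subr_phi // pair_big (bigD1 (i, j)) //=; apply: le_trans.
  by rewrite lerDl; apply: sumr_ge0 => k _; exact: gap_ge0.
have /andP[lo_le le_hi] := entropic_gap_le_bounds eps_gt0 (mulr_gt0 (V_gt0 i j) slack_gt0) gap_le.
apply/andP; split.
  rewrite /al mulrC divfK ?pnatr_eq0 //; apply: le_trans (bigmin_le _ (i, j) _) _ => /=.
  by rewrite ler_pdivrMr // mulrC.
by apply: le_trans (le_bigmax _ _ (i, j)); rewrite /= ler_pdivlMr // mulrC.
Qed.

Definition pair_of_row (v : 'rV[R]_(n1 + n2)) : 'cV[R]_n1 * 'cV[R]_n2 :=
  ((lsubmx v)^T, (rsubmx v)^T).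

Definition row_of_pair z : 'rV[R]_(n1 + n2) := row_mx z.1^T z.2^T.

Lemma row_of_pairK : cancel row_of_pair pair_of_row.
Proof. by case=> x y; rewrite /pair_of_row /row_of_pair row_mxKl row_mxKr !trmxK. Qed.

Lemma pair_of_row1 v i : (pair_of_row v).1 i ord0 = v ord0 (lshift n2 i).
Proof. by rewrite !mxE. Qed.

Lemma pair_of_row2 v j : (pair_of_row v).2 j ord0 = v ord0 (rshift n1 j).
Proof. by rewrite !mxE. Qed.

Lemma slack_pair_of_row v i j :
  slack C (pair_of_row v) i j = C i j - v ord0 (lshift n2 i) - v ord0 (rshift n1 j).
Proof. by rewrite /slack pair_of_row1 pair_of_row2. Qed.

Lemma continuous_slack_pair_of_row i j : continuous (fun v => slack C (pair_of_row v) i j).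
Proof.
rewrite (_ : (fun v => slack C (pair_of_row v) i j) =
    fun w : 'rV[R]_(n1 + n2) => C i j - w ord0 (lshift n2 i) - w ord0 (rshift n1 j)).
  move=> v; exact: (cvgB (cvgB (cvg_cst (C i j)) (@coord_continuous R 1 (n1 + n2) ord0 _ v))
    (@coord_continuous R 1 (n1 + n2) ord0 _ v)).
by apply: funext => w; rewrite slack_pair_of_row.
Qed.

Lemma continuous_phi_pair_of_row v : (forall i j, 0 < slack C (pair_of_row v) i j) ->
  {for v, continuous (fun w => phi p1 p2 eps C (pair_of_row w))}.
Proof.
move=> slack_gt0.
have lin n (p : 'cV[R]_n) (f : 'I_n -> 'I_(n1 + n2)) :
    {for v, continuous (fun w : 'rV[R]_(n1 + n2) => \sum_i p i ord0 * w ord0 (f i))}.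
  apply: (@continuous_sum_at _ _ _ (fun i (w : 'rV[R]_(n1 + n2)) => p i ord0 * w ord0 (f i))) => i.
  exact: (cvgM (cvg_cst _) (@coord_continuous R 1 (n1 + n2) ord0 _ v)).
have log_part : {for v, continuous (fun w : 'rV[R]_(n1 + n2) =>
    \sum_i \sum_j ln (slack C (pair_of_row w) i j))}.
  apply: (@continuous_sum_at _ _ _
    (fun i (w : 'rV[R]_(n1 + n2)) => \sum_j ln (slack C (pair_of_row w) i j))) => i.
  apply: (@continuous_sum_at _ _ _
    (fun j (w : 'rV[R]_(n1 + n2)) => ln (slack C (pair_of_row w) i j))) => j.
  have slack_cont : {for v, continuous (fun w => slack C (pair_of_row w) i j)}.
    exact: continuous_slack_pair_of_row.
  exact: (continuous_comp slack_cont (continuous_ln (slack_gt0 i j))).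
have x_part := lin _ p1 (lshift n2); have y_part := lin _ p2 (@rshift n1 n2).
rewrite (_ : (fun w => phi p1 p2 eps C (pair_of_row w)) = fun w =>
    \sum_i p1 i ord0 * w ord0 (lshift n2 i) + \sum_j p2 j ord0 * w ord0 (rshift n1 j)
    + eps * \sum_i \sum_j ln (slack C (pair_of_row w) i j) + (n1 * n2)%:R * eps * (1 - ln eps)).
  exact: (continuousD (continuousD (continuousD x_part y_part)
    (continuousM (@cst_continuous _ R eps v) log_part)) (@cst_continuous _ R _ v)).
by apply: funext => w; rewrite phiE; under eq_bigr do rewrite pair_of_row1;
  under [\sum_(j < n2) _]eq_bigr do rewrite pair_of_row2.
Qed.

Definition slack_box al be z := forall i j, al <= slack C z i j <= be.

Definition slack_slice al be : set 'rV[R]_(n1 + n2) :=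
  [set v : 'rV[R]_(n1 + n2) | v ord0 (rshift n1 j0) = 0] `&`
  \bigcap_(k in [set: 'I_n1 * 'I_n2])
     ((fun v => slack C (pair_of_row v) k.1 k.2) @^-1` `[al, be]).

Lemma slack_sliceP al be v : slack_slice al be v <->
  (pair_of_row v).2 j0 ord0 = 0 /\ slack_box al be (pair_of_row v).
Proof.
rewrite pair_of_row2; split=> [[y0 inbox]|[y0 inbox]]; split=> //.
  by move=> i j; have := inbox (i, j) I; rewrite /= in_itv.
by move=> k _; rewrite /= in_itv /=; exact: inbox.
Qed.

Lemma closed_slack_slice al be : closed (slack_slice al be).
Proof.
apply: closedI.
  have := (continuous_closedP (fun v : 'rV[R]_(n1 + n2) => v ord0 (rshift n1 j0))).1.
  by move=> /(_ (@coord_continuous R 1 (n1 + n2) ord0 (rshift n1 j0)) _ (@closed_eq R 0)).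
apply: closed_bigI => k _.
have := (continuous_closedP (fun v => slack C (pair_of_row v) k.1 k.2)).1.
by move=> /(_ (@continuous_slack_pair_of_row k.1 k.2) _ (@itv_closed _ R al be)).
Qed.

(* Since y_j0 = 0, the slacks in column j0 pin x, and then those in row i0 pin y. *)
Lemma slack_slice_bounded al be : 0 <= al ->
  exists M, forall v, slack_slice al be v -> forall k, `|v ord0 k| <= M.
Proof.
move=> al_ge0; pose cb := \big[Num.max/0]_(k : 'I_n1 * 'I_n2) `|C k.1 k.2|.
have C_le i j : `|C i j| <= cb by exact: (le_bigmax _ (fun k => `|C k.1 k.2|) (i, j)).
have cb_ge0 : 0 <= cb by exact: bigmax_ge_id.
exists (2 * (cb + be)) => v /slack_sliceP[y0 inbox]; set z := pair_of_row v in y0 inbox.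
have s_abs i j : `|slack C z i j| <= be.
  by have /andP[s_ge s_le] := inbox i j; rewrite ger0_norm //; lra.
have x_le i : `|z.1 i ord0| <= cb + be.
  have -> : z.1 i ord0 = C i j0 - slack C z i j0 by rewrite /slack y0; ring.
  by apply: le_trans (ler_normB _ _) _; apply: lerD.
have y_le j : `|z.2 j ord0| <= 2 * (cb + be).
  have -> : z.2 j ord0 = C i0 j - z.1 i0 ord0 - slack C z i0 j by rewrite /slack; ring.
  apply: le_trans (ler_normB _ _) _; apply: le_trans (lerD (ler_normB _ _) (s_abs i0 j)) _.
  by have := C_le i0 j; have := x_le i0; lra.
move=> k; rewrite -(splitK k); case: (split k) => [i|j] /=; last first.
  by rewrite -pair_of_row2 -/z.
rewrite -pair_of_row1 -/z; apply: le_trans (x_le i) _.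
by have := inbox i0 j0; lra.
Qed.

(* phi is invariant along (1, -1), so it is enough to maximise over the compact slice
   y_j0 = 0 of the box. *)
Lemma exists_max_on_slack_box al be : 0 < al -> (exists z, slack_box al be z) ->
  exists2 c, slack_box al be c &
    forall z, slack_box al be z -> phi p1 p2 eps C z <= phi p1 p2 eps C c.
Proof.
move=> al_gt0 [z0 z0_box].
have normalize z : slack_box al be z -> slack_slice al be (row_of_pair (shift z (z.2 j0 ord0))).
  move=> z_box; apply/slack_sliceP; rewrite row_of_pairK; split.
    by rewrite /shift /= !mxE mulr1 subrr.
  by move=> i j; rewrite slack_shift.
have F_cont v : slack_slice al be v ->
    {for v, continuous (fun w => phi p1 p2 eps C (pair_of_row w))}.
  case/slack_sliceP => _ inbox; apply: continuous_phi_pair_of_row => i j.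
  by have := inbox i j; lra.
have [M slice_bounded] := slack_slice_bounded be (ltW al_gt0).
have [c /slack_sliceP[_ c_box] c_max] := bounded_closed_max_rV
  (ex_intro _ _ (normalize z0 z0_box)) (@closed_slack_slice al be) slice_bounded F_cont.
exists (pair_of_row c) => // z /normalize/c_max.
by rewrite row_of_pairK phi_shift.
Qed.

Lemma exists_Dhat : exists z, Dhat C z.
Proof.
pose cb := \big[Num.max/0]_(k : 'I_n1 * 'I_n2) `|C k.1 k.2|.
exists (const_mx (- (cb + 1)), 0); apply/Dhat_slack => i j.
have := le_bigmax 0 (fun k : 'I_n1 * 'I_n2 => `|C k.1 k.2|) (i, j).
by rewrite /slack /= !mxE -/cb ler_norml => /andP[C_ge _]; lra.
Qed.

Lemma exists_Voset_Umat : exists2 z, Dhat C z & Voset p1 p2 (Umat C eps z).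
Proof.
have [z0 Dz0] := exists_Dhat.
have [al al_gt0 [be bounds]] := slack_bounds_of_phi_ge (phi p1 p2 eps C z0).
have z0_box : slack_box al (be + al) z0.
  by move=> i j; have /andP[] := bounds z0 Dz0 (lexx _) i j; lra.
have [c c_box c_max] := exists_max_on_slack_box al_gt0 (ex_intro _ z0 z0_box).
have Dc : Dhat C c by apply/Dhat_slack => i j; have /andP[] := c_box i j; lra.
have c_bounds := bounds c Dc (c_max z0 z0_box).
have perturb_box k l t (b : bool) : - al <= t <= al ->
    al <= slack C c k l - t * b%:R <= be + al.
  by case: b; rewrite ?mulr1 ?mulr0 ?subr0 => /andP[t_ge t_le];
    have /andP[] := c_bounds k l; lra.
exists c => //; apply: Voset_Umat_of_sums => // [i|j].
- apply: (row_sum_of_max (p2 := p2) eps_gt0 al_gt0 Dc) => [j|t t_in].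
    by case/andP: (c_bounds i j).
  by apply: c_max => k l; rewrite slack_movex; exact: perturb_box.
- apply: (col_sum_of_max (p1 := p1) eps_gt0 al_gt0 Dc) => [i|t t_in].
    by case/andP: (c_bounds i j).
  by apply: c_max => k l; rewrite slack_movey; exact: perturb_box.
Qed.

End Existence.

Section Optimum.
Variables (R : realType) (n1 n2 : nat) (C : 'M[R]_(n1, n2)) (eps : R).
Variables (p1 : 'cV[R]_n1) (p2 : 'cV[R]_n2).
Hypotheses (eps_gt0 : 0 < eps) (sum_p : sumv p1 = sumv p2).
Variables (i0 : 'I_n1) (j0 : 'I_n2) (u : 'cV[R]_n1 * 'cV[R]_n2).
Hypotheses (Du : Dset C u) (VU : Voset p1 p2 (Umat C eps u)).
Implicit Types (z w : 'cV[R]_n1 * 'cV[R]_n2) (V : 'M[R]_(n1, n2)).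

Lemma tau_obj_opt : tau_obj C eps (Umat C eps u) = phi p1 p2 eps C u.
Proof. exact: tau_obj_Umat Du.1 VU. Qed.

Lemma is_min_tau_obj : is_min (Voset p1 p2) (tau_obj C eps) (phi p1 p2 eps C u).
Proof.
by split=> [|V VV]; [exists (Umat C eps u); rewrite ?tau_obj_opt | exact: phi_le_tau_obj Du.1].
Qed.

Lemma is_max_phi_Dhat : is_max (Dhat C) (phi p1 p2 eps C) (phi p1 p2 eps C u).
Proof.
split=> [|z Dz]; first by exists u; first exact: Du.1.
by rewrite -tau_obj_opt; exact: phi_le_tau_obj.
Qed.

Lemma is_max_phi_Dset : is_max (Dset C) (phi p1 p2 eps C) (phi p1 p2 eps C u).
Proof. by split=> [|z [Dz _]]; [exists u | exact: is_max_phi_Dhat.2]. Qed.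

Lemma slack_eq_of_tau_obj_opt z : Dhat C z ->
  tau_obj C eps (Umat C eps u) = phi p1 p2 eps C z -> forall i j, slack C z i j = slack C u i j.
Proof.
move=> Dz /(tau_obj_eq_phi eps_gt0 VU Dz)/matrixP UE i j.
by have := UE i j; rewrite !Umat_slack => /(mulfI (lt0r_neq0 eps_gt0))/invr_inj ->.
Qed.

Lemma argmax_phiP z :
  (Dhat C z /\ forall w, Dhat C w -> phi p1 p2 eps C w <= phi p1 p2 eps C z) <-> Lline u z.
Proof.
split=> [[Dz z_max]|[t zE]].
  have phi_z : phi p1 p2 eps C z = phi p1 p2 eps C u.
    by apply/eqP; rewrite eq_le (is_max_phi_Dhat.2 z Dz) (z_max u Du.1).
  exists (z.1 i0 ord0 - u.1 i0 ord0); apply: (slack_eq_shift i0 j0).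
  by apply: slack_eq_of_tau_obj_opt; rewrite // tau_obj_opt phi_z.
have {zE}-> : z = shift u t by [].
split=> [|w Dw]; first exact/Dhat_shift/Du.1.
by rewrite phi_shift //; exact: is_max_phi_Dhat.2.
Qed.

Lemma Lline_Dset z : Lline u z -> Dset C z -> z = u.
Proof.
move=> [t zE] Dz; have {zE}zE : z = shift u t by [].
by apply: (Dset_slack_inj i0 j0 Dz Du) => i j; rewrite zE slack_shift.
Qed.

Lemma Voset_UmatP z : Dset C z -> Voset p1 p2 (Umat C eps z) <-> z = u.
Proof.
move=> Dz; split=> [VUz|->] //; apply: (Dset_slack_inj i0 j0 Dz Du).
have phi_z : phi p1 p2 eps C z = phi p1 p2 eps C u.
  apply/eqP; rewrite eq_le (is_max_phi_Dhat.2 z Dz.1) /= -(tau_obj_Umat Dz.1 VUz).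
  exact: phi_le_tau_obj Du.1.
by apply: slack_eq_of_tau_obj_opt Dz.1 _; rewrite tau_obj_opt phi_z.
Qed.

Lemma tau_obj_opt_unique V : Voset p1 p2 V ->
  tau_obj C eps V = tau_obj C eps (Umat C eps u) -> V = Umat C eps u.
Proof. by move=> VV; rewrite tau_obj_opt; exact: tau_obj_eq_phi Du.1. Qed.

End Optimum.

Theorem theorem1p1 (R : realType) (n1 n2 : nat) (C : 'M[R]_(n1, n2)) (eps : R)
  (p1 : 'cV[R]_n1) (p2 : 'cV[R]_n2) :
  (0 < n1)%N -> (0 < n2)%N -> 0 < eps ->
  (forall i, 0 < p1 i ord0) -> (forall j, 0 < p2 j ord0) ->
  sumv p1 = sumv p2 ->
  concave_on (Dhat C) (phi p1 p2 eps C) /\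
  strictly_concave_on (Dset C) (phi p1 p2 eps C) /\
  (exists tau : R,
     is_min (Voset p1 p2) (tau_obj C eps) tau /\
     is_max (Dhat C) (phi p1 p2 eps C) tau /\
     is_max (Dset C) (phi p1 p2 eps C) tau) /\
  (exists u : 'cV[R]_n1 * 'cV[R]_n2,
     (forall z, (Dhat C z /\ forall w, Dhat C w ->
                   phi p1 p2 eps C w <= phi p1 p2 eps C z) <-> Lline u z) /\
     Dset C u /\ (forall z, Lline u z -> Dset C z -> z = u) /\
     (forall z, Dset C z -> (Voset p1 p2 (Umat C eps z) <-> z = u)) /\
     Voset p1 p2 (Umat C eps u) /\
     (forall V, Voset p1 p2 V ->
        tau_obj C eps (Umat C eps u) <= tau_obj C eps V) /\
     (forall V, Voset p1 p2 V ->
        tau_obj C eps V = tau_obj C eps (Umat C eps u) -> V = Umat C eps u)).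
Proof.
move=> n1_gt0 n2_gt0 eps_gt0 p1_gt0 p2_gt0 sum_p.
pose i0 := Ordinal n1_gt0; pose j0 := Ordinal n2_gt0.
have [z Dz VUz] := exists_Voset_Umat C eps_gt0 p1_gt0 p2_gt0 sum_p i0 j0.
have Du := Dset_shift_balance i0 Dz; set u := shift z _ in Du.
have VU : Voset p1 p2 (Umat C eps u) by rewrite /u Umat_shift.
split; first exact: concave_phi.
split; first exact: strictly_concave_phi.
split.
  exists (phi p1 p2 eps C u); split; first exact: is_min_tau_obj.
  by split; [exact: is_max_phi_Dhat | exact: is_max_phi_Dset].
exists u; split; first exact: (argmax_phiP eps_gt0 sum_p i0 j0 Du VU).
split=> //; split; first exact: (Lline_Dset i0 j0 Du).
split; first by move=> w; exact: (Voset_UmatP eps_gt0 i0 j0 Du VU).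
split=> //; split; last exact: tau_obj_opt_unique.
by move=> V VV; rewrite (tau_obj_opt Du VU); exact: (is_min_tau_obj eps_gt0 Du VU).2.
Qed.
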